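(* For fixed $k \in \mathbb{N}$, fixed information resource $f$, and decomposable probability-of-success metric $\phi$, define \[ \tau = \{T \mid T \subseteq \Omega, |T| = k\}, \quad \tau_{q_{\text{min}}} = \{T \mid T \subseteq \Omega, |T| = k, \phi(T,f) \geq q_{\text{min}} \}. \] Then \[ \frac{|\tau_{q_{\text{min}}}|}{|\tau|} \leq \frac{p}{q_{\text{min}}}, \] where $p = \frac{k}{|\Omega|}$.
   Context: Algorithmic search framework: finite discrete search space $\Omega$, target sets $T\subseteq\Omega$ with indicator vectors $\mathbf{t}$, information resource $f$, and a fixed search algorithm. A probability-of-success metric $\phi$ is decomposable if there exists a probability vector $\mathbf{P}_{\phi,f}$ over $\Omega$, not a function of the target, with $\phi(t,f)=\mathbf{t}^{\top}\mathbf{P}_{\phi,f}=P_\phi(X\in t\mid f)$. $q_{\text{min}}\in(0,1]$ is a success threshold. *)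

From mathcomp Require Import all_boot all_order all_algebra.
Set Implicit Arguments. Unset Strict Implicit. Unset Printing Implicit Defensive.
Import Order.TTheory GRing.Theory Num.Theory.
Local Open Scope ring_scope.

Definition prob_vector (R : realFieldType) (Omega : finType) (P : Omega -> R) : Prop :=
  (forall x, 0 <= P x) /\ \sum_(x : Omega) P x = 1.

(* phi : targets -> information resources -> R is decomposable if for every
   information resource f there is a probability vector P_{phi,f}
   (independent of the target) with phi(t,f) = t^T P_{phi,f}. *)
Definition decomposable (R : realFieldType) (Omega F : finType)
    (phi : {set Omega} -> F -> R) : Prop :=
  forall f : F, exists P : Omega -> R,
    prob_vector P /\ forall T : {set Omega}, phi T f = \sum_(x in T) P x.

(** Writing P(T) for the sum of the probability vector over T, Markov's
    inequality for the counting measure on the k-subsets gives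
    q_min |tau_q| <= sum_{T in tau} P(T).  By double counting, that sum is
    sum_x P(x) * c_x, where c_x is the number of k-subsets containing x;
    a transposition exchanging x and y shows c_x = c_y, and counting the
    pairs (x, T) with x in T gives |Omega| c = k |tau|.  Hence
    sum_{T in tau} P(T) = k |tau| / |Omega|, and dividing by q_min |tau|
    yields the bound. *)
From mathcomp Require Import all_boot all_order all_algebra perm.
Import Order.TTheory GRing.Theory Num.Theory.
Local Open Scope ring_scope.

Lemma markov_card {R : numDomainType} {I : finType} (A : {pred I})
    (w : I -> R) (q : R) :
  (forall i, i \in A -> 0 <= w i) ->
  q * #|[set i in A | q <= w i]|%:R <= \sum_(i in A) w i.
Proof.
move=> w_ge0.
rewrite (bigID (fun i => q <= w i)) /= -[leLHS]addr0.
apply: lerD; last by apply: sumr_ge0 => i /andP [/w_ge0].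
rewrite -sumr_const mulr_sumr mulr1.
rewrite [leLHS](eq_bigl (fun i => (i \in A) && (q <= w i))) => [|i]; last by rewrite !inE.
by apply: ler_sum => i /andP [].
Qed.

Section KSubsets.
Variables (Omega : finType) (k : nat).

Definition ksets := [set T : {set Omega} | #|T| == k].

Definition ksets_through (x : Omega) := [set T in ksets | x \in T].

Lemma card_ksets_through_le x y :
  (#|ksets_through x| <= #|ksets_through y|)%N.
Proof.
have swap_inj : injective (tperm x y) by exact: perm_inj.
rewrite -(card_imset _ (imset_inj swap_inj)).
apply/subset_leq_card/subsetP => U /imsetP [T].
rewrite !inE => /andP [/eqP cardT xT] ->.
rewrite card_imset // cardT eqxx /=.
by rewrite -{1}(tpermL x y) mem_imset.
Qed.

Lemma card_ksets_through_eq x y : #|ksets_through x| = #|ksets_through y|.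
Proof. by apply/eqP; rewrite eqn_leq !card_ksets_through_le. Qed.

Lemma sum_ksets_sum (V : nmodType) (g : Omega -> V) :
  \sum_(T in ksets) \sum_(x in T) g x = \sum_x g x *+ #|ksets_through x|.
Proof.
rewrite (exchange_big_dep predT) //=.
apply: eq_bigr => x _; rewrite -sumr_const.
by apply: eq_bigl => T; rewrite !inE.
Qed.

Lemma card_ksets_through (x : Omega) :
  (#|Omega| * #|ksets_through x| = k * #|ksets|)%N.
Proof.
have := @sum_ksets_sum _ (fun=> 1%N).
rewrite (eq_bigr (fun=> k)) => [|T]; last by rewrite inE sum1_card => /eqP.
under [RHS]eq_bigr => y _ do rewrite (card_ksets_through_eq y x).
by rewrite !sum_nat_const natn mulnC => ->.
Qed.

Lemma card_mul_sum_ksets (V : nmodType) (g : Omega -> V) :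
  (\sum_(T in ksets) \sum_(x in T) g x) *+ #|Omega|
  = (\sum_x g x) *+ (k * #|ksets|).
Proof.
have [x0 _ | Omega0] := pickP (@predT Omega); last first.
  by rewrite [\sum_x g x]big_pred0 // mul0rn (eq_card0 Omega0) mulr0n.
rewrite sum_ksets_sum.
under eq_bigr => x _ do rewrite (card_ksets_through_eq x x0).
by rewrite sumrMnl -mulrnA mulnC card_ksets_through.
Qed.

End KSubsets.

Theorem theorem3 (R : realFieldType) (Omega F : finType)
    (phi : {set Omega} -> F -> R) (k : nat) (f : F) (qmin : R) :
  decomposable phi -> 0 < qmin -> qmin <= 1 ->
  (#|[set T : {set Omega} | (#|T| == k) && (qmin <= phi T f)]|%:R
     / #|[set T : {set Omega} | #|T| == k]|%:R)
  <= (k%:R / #|Omega|%:R) / qmin.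
Proof.
move=> /(_ f) [P [[P_ge0 P_sum] phiE]] qmin_gt0 _.
rewrite -/(ksets Omega k).
set A := ksets Omega k.
have -> : [set T : {set Omega} | (#|T| == k) && (qmin <= phi T f)]
        = [set T in A | qmin <= \sum_(x in T) P x].
  by apply/setP => T; rewrite !inE phiE.
have Omega_gt0 : (0 < #|Omega|)%N.
  rewrite lt0n; apply: contra_eqN P_sum => /eqP/card0_eq Omega0.
  by rewrite big_pred0 // eq_sym oner_eq0.
have weight : \sum_(T in A) \sum_(x in T) P x = k%:R * #|A|%:R / #|Omega|%:R.
  apply: (canRL (mulfK _)); first by rewrite pnatr_eq0 -lt0n.
  by rewrite -natrM mulr_natr card_mul_sum_ksets P_sum.
have := markov_card A (fun T => \sum_(x in T) P x) qmin.
rewrite weight => /(_ (fun T _ => sumr_ge0 _ (fun x _ => P_ge0 x))) markov.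
have [A0 | A_gt0] := posnP #|A|.
  (* With no k-subsets the ratio is x / 0, which is 0 since 0^-1 = 0. *)
  by rewrite A0 invr0 mulr0 !divr_ge0 // ltW.
by rewrite ler_pdivrMr ?ltr0n // mulrAC ler_pdivlMr // mulrC mulrAC.
Qed.
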